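(* Given a bounded word equation $u \,\dot{=}\, v$ with $u,v \in \Xi^*$ and bounds $B:\Gamma\to\mathbb{N}$, the equation automaton $A(u \,\dot{=}\, v,B)$ reaches an accepting state if and only if there exists a substitution $S$ such that $S(u)=S(v)$ (i.e. $S$ is a solution of $u \,\dot{=}\, v$) and $|S(X)| \leq B(X)$ for all $X \in \Gamma$.
   Context: Let $\Xi=\Sigma\cup\Gamma$ with $\Sigma$ a finite set of letters and $\Gamma$ a finite set of variables, $\Sigma\cap\Gamma=\emptyset$. A substitution is a morphism $S:\Xi^*\to\Sigma^*$ fixing letters. A bounded word equation is a word equation $u \,\dot{=}\, v$ together with bounds $b_X=B(X)$ on the lengths of the images of the variables. Each variable $X$ is replaced by a sequence of ''filled variables'' $X^{(0)}\cdots X^{(b_X-1)}$, each of which is mapped to exactly one symbol of $\Sigma_\lambda=\Sigma\cup\{\lambda\}$, where the fresh symbol $\lambda$ is a placeholder for the empty word (marking unused positions at the end of a variable). Write $\hat u,\hat v$ for the resulting filled patterns over $\Sigma\cup\hat\Gamma$ ($\hat\Gamma$ the set of filled variables). For a partial filled substitution $\hat S$, two symbols $a,b$ are compatible, $a \sim_{\hat S} b$, iff $\hat S(a)=\hat S(b)$ or one of $\hat S(a),\hat S(b)$ is undefined; $S[X\mapsto b]$ denotes $S\cup\{X\mapsto b\}$ if $S(X)$ is undefined and $S$ otherwise. The equation automaton $A(u \,\dot{=}\, v,B)=(Q,\delta,I,F)$ has states $((i,j),S)$ with $i\in\{0,\dots,|\hat u|\}$, $j\in\{0,\dots,|\hat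 v|\}$ and $S$ a partial map from filled symbols to $\Sigma_\lambda$; transitions on input $a\in\Sigma_\lambda$: $\delta(((i,j),S),a)=((i+1,j+1),S[\hat u[i]\mapsto a][\hat v[j]\mapsto a])$ if $\hat u[i]\sim_{\hat S}\hat v[j]\sim_{\hat S} a$; $=((i+1,j),S[\hat u[i]\mapsto\lambda])$ if $\hat u[i]\sim_{\hat S}\lambda=a$; $=((i,j+1),S[\hat v[j]\mapsto\lambda])$ if $\hat v[j]\sim_{\hat S}\lambda=a$ (nondeterministic). Initial state $((0,0),\{a\mapsto a \mid a\in\Sigma_\lambda\})$; final states are all $((|\hat u|,|\hat v|),S)$. *)

From mathcomp Require Import all_boot.
Set Implicit Arguments. Unset Strict Implicit. Unset Printing Implicit Defensive.

Section EqAut.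
Variables (Sigma Gamma : finType).

(* Words over Xi = Sigma ∪ Gamma: letters are [inl a], variables are [inr X]. *)
Definition word := seq (Sigma + Gamma).

Definition subst (S : Gamma -> seq Sigma) (w : word) : seq Sigma :=
  flatten [seq match x with inl a => [:: a] | inr X => S X end | x <- w].

(* Filled symbols together with Sigma_lambda:
   [inl (Some a)] = letter a, [inl None] = lambda, [inr (X,k)] = X^(k). *)
Definition sym := (option Sigma + (Gamma * nat))%type.

Definition fill (B : Gamma -> nat) (x : Sigma + Gamma) : seq sym :=
  match x with
  | inl a => [:: inl (Some a)]
  | inr X => [seq inr (X, k) | k <- iota 0 (B X)]
  end.

Definition hat (B : Gamma -> nat) (w : word) : seq sym := flatten (map (fill B) w).

Definition pmap := sym -> option (option Sigma).

Definition compat (S : pmap) (x y : sym) : Prop :=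
  match S x, S y with
  | Some a, Some b => a = b
  | _, _ => True
  end.

Definition upd (S : pmap) (x : sym) (b : option Sigma) : pmap :=
  match S x with
  | Some _ => S
  | None => fun y => if y == x then Some b else S y
  end.

Definition state := ((nat * nat) * pmap)%type.

Definition init_state : state :=
  ((0, 0), fun s => match s with inl a => Some a | inr _ => None end).

(* Transition relation of A(u =. v, B), the input letter being existentially
   quantified (we only care about reachability). *)
Inductive step (B : Gamma -> nat) (u v : word) : state -> state -> Prop :=
| step_both i j S x y (a : option Sigma) :
    onth (hat B u) i = Some x -> onth (hat B v) j = Some y ->
    compat S x y -> compat S y (inl a) -> compat S x (inl a) ->
    step B u v ((i, j), S) ((i.+1, j.+1), upd (upd S x a) y a)
| step_left i j S x :
    onth (hat B u) i = Some x -> compat S x (inl None) ->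
    step B u v ((i, j), S) ((i.+1, j), upd S x None)
| step_right i j S y :
    onth (hat B v) j = Some y -> compat S y (inl None) ->
    step B u v ((i, j), S) ((i, j.+1), upd S y None).

Inductive reach (B : Gamma -> nat) (u v : word) : state -> Prop :=
| reach_init : reach B u v init_state
| reach_step q q' : reach B u v q -> step B u v q q' -> reach B u v q'.

Definition accepts (B : Gamma -> nat) (u v : word) : Prop :=
  exists S : pmap, reach B u v ((size (hat B u), size (hat B v)), S).

End EqAut.

From Pilot Require Import Defs.
From mathcomp Require Import all_boot zify.
Set Implicit Arguments. Unset Strict Implicit. Unset Printing Implicit Defensive.

(* Soundness: along every run, all filled symbols read so far are assigned,
   and the non-lambda letters assigned to them spell the same word on both
   sides.  Hence an accepting state yields a solution: X is read off as the
   letters assigned to X^(0) ... X^(B X - 1), lambdas dropped.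
   Completeness: fill X^(k) with the k-th letter of S(X), or lambda beyond its
   end.  The run that skips a lambda whenever one comes next, and otherwise
   reads a letter on both sides at once, never gets stuck, because the
   unread suffixes of the two sides always spell the same word. *)

Lemma onth_take (T : Type) (s : seq T) i x :
  onth s i = Some x -> take i.+1 s = take i s ++ [:: x].
Proof.
move=> six; have lt_i_s : i < size s by rewrite -onthTE six.
by rewrite (take_nth x lt_i_s) (onth_nth x _ _ _ six) cats1.
Qed.

Lemma drop_onth (T : Type) (s : seq T) i x t :
  drop i s = x :: t -> [/\ i < size s, onth s i = Some x & drop i.+1 s = t].
Proof.
elim: s i => [|y s IHs] [|i] //=; first by rewrite drop0 => -[-> ->].
by case/IHs.
Qed.

Lemma pmap_map (A B R : Type) (f : B -> option R) (g : A -> B) s :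
  pmap f (map g s) = pmap (f \o g) s.
Proof. by elim: s => //= x s ->. Qed.

Lemma pmap_onth_iota (T : Type) (s : seq T) n :
  size s <= n -> pmap (onth s) (iota 0 n) = s.
Proof.
elim: s n => [|x s IHs] n.
  by move=> _; elim: (iota 0 n) => //= k l ->; rewrite onth0n.
case: n => [|n] //= lt_s_n.
by rewrite -[1]/(1 + 0) iotaDl pmap_map; congr (_ :: _); apply: IHs.
Qed.

Lemma pmap_eq_cases (A R : Type) (f : A -> option R) s t :
  pmap f s = pmap f t ->
  [\/ s = [::] /\ t = [::],
      exists x s', s = x :: s' /\ f x = None,
      exists y t', t = y :: t' /\ f y = None |
      exists x y s' t', [/\ s = x :: s', t = y :: t', f x = f y & pmap f s' = pmap f t']].
Proof.
case: s => [|x s]; case: t => [|y t] /=; first by constructor 1.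
- by case fy: (f y) => [b|] // _; constructor 3; exists y, t.
- by case fx: (f x) => [a|] // _; constructor 2; exists x, s.
case fx: (f x) => [a|]; last by constructor 2; exists x, s.
case fy: (f y) => [b|]; last by constructor 3; exists y, t.
by case=> eq_ab eq_st; constructor 4; exists x, y, s, t; rewrite fx fy eq_ab.
Qed.

Section EquationAutomaton.
Variables (Sigma Gamma : finType) (B : Gamma -> nat).

Local Notation sym := (sym Sigma Gamma).
Local Notation psubst := (Defs.pmap Sigma Gamma).

Lemma eq_subst (S1 S2 : Gamma -> seq Sigma) : S1 =1 S2 -> subst S1 =1 subst S2.
Proof. by move=> eqS w; congr flatten; apply: eq_map => -[]. Qed.

(* [f] is a total filled substitution, [None] encoding lambda. *)
Definition filled_subst (f : sym -> option Sigma) (X : Gamma) : seq Sigma :=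
  pmap f (fill B (inr X)).

Lemma pmap_hat (f : sym -> option Sigma) w :
  (forall o, f (inl o) = o) -> pmap f (hat B w) = subst (filled_subst f) w.
Proof.
move=> f_letter; elim: w => //= x w IHw.
rewrite /hat /= pmap_cat -/(hat B w) IHw.
by case: x => [a|X] //=; rewrite f_letter.
Qed.

Lemma size_filled_subst f X : size (filled_subst f X) <= B X.
Proof. by rewrite size_pmap (leq_trans (count_size _ _)) // size_map size_iota. Qed.

Definition lookup (M : psubst) (s : sym) : option Sigma := odflt None (M s).

Definition letters_fixed (M : psubst) := forall o, M (inl o) = Some o.

Definition defined_on (M : psubst) (p : seq sym) := {in p, forall s, M s != None}.

Definition extends (M M' : psubst) := forall s, M s != None -> M' s = M s.

Lemma extends_trans (M1 M2 M3 : psubst) :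
  extends M1 M2 -> extends M2 M3 -> extends M1 M3.
Proof. by move=> ext12 ext23 s def1; rewrite ext23 ?ext12. Qed.

Lemma extends_letters_fixed (M M' : psubst) :
  extends M M' -> letters_fixed M -> letters_fixed M'.
Proof. by move=> ext fixM o; rewrite ext fixM. Qed.

Lemma extends_lookup (M M' : psubst) p :
  extends M M' -> defined_on M p -> pmap (lookup M') p = pmap (lookup M) p.
Proof. by move=> ext def; apply: eq_in_pmap => s /def /ext; rewrite /lookup => ->. Qed.

Lemma upd_extends (M : psubst) x b : extends M (upd M x b).
Proof.
move=> s; rewrite /upd; case Mx: (M x) => [c|] // def_s.
by case: eqP => // eq_sx; rewrite eq_sx Mx in def_s.
Qed.

Lemma upd_self (M : psubst) x b : M x = None \/ M x = Some b -> upd M x b x = Some b.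
Proof. by case=> Mx; rewrite /upd Mx ?eqxx. Qed.

Lemma upd_cases (M : psubst) x b y : upd M x b y = M y \/ upd M x b y = Some b.
Proof. by rewrite /upd; case: (M x) => [c|]; [left | case: eqP; [right | left]]. Qed.

Lemma compat_letter (M : psubst) s a :
  letters_fixed M -> compat M s (inl a) -> M s = None \/ M s = Some a.
Proof. by rewrite /compat => ->; case: (M s) => [c ->|]; [right | left]. Qed.

(* The run invariant, [p] and [q] being the prefixes of the two sides read so far. *)
Definition consistent (M : psubst) (p q : seq sym) :=
  [/\ letters_fixed M, defined_on M p, defined_on M q &
      pmap (lookup M) p = pmap (lookup M) q].

Lemma consistent_cat (M M' : psubst) p q dp dq :
  extends M M' -> consistent M p q -> consistent M' dp dq ->
  consistent M' (p ++ dp) (q ++ dq).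
Proof.
move=> ext [_ def_p def_q eq_pq] [fixM' def_dp def_dq eq_d].
split=> //.
- by move=> s; rewrite mem_cat => /orP[s_p|/def_dp //]; rewrite ext def_p.
- by move=> s; rewrite mem_cat => /orP[s_q|/def_dq //]; rewrite ext def_q.
- rewrite !pmap_cat (extends_lookup ext def_p) (extends_lookup ext def_q).
  by rewrite eq_pq eq_d.
Qed.

Lemma consistent_pair (M : psubst) x y a :
  letters_fixed M -> M x = Some a -> M y = Some a -> consistent M [:: x] [:: y].
Proof.
move=> fixM Mx My; split; rewrite //= /lookup ?Mx ?My //.
- by move=> s; rewrite inE => /eqP ->; rewrite Mx.
- by move=> s; rewrite inE => /eqP ->; rewrite My.
Qed.

Lemma consistent_lambda (M : psubst) x :
  letters_fixed M -> M x = Some None -> consistent M [:: x] [::].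
Proof.
move=> fixM Mx; split; rewrite //= /lookup ?Mx //.
by move=> s; rewrite inE => /eqP ->; rewrite Mx.
Qed.

Lemma consistent_sym (M : psubst) p q : consistent M p q -> consistent M q p.
Proof. by case. Qed.

Section Runs.
Variables u v : seq (Sigma + Gamma).

Local Notation hu := (hat B u).
Local Notation hv := (hat B v).

Definition consistent_state (q : state Sigma Gamma) : Prop :=
  let: ((i, j), M) := q in consistent M (take i hu) (take j hv).

Lemma consistent_step q q' :
  step B u v q q' -> consistent_state q -> consistent_state q'.
Proof.
case=> [i j M x y a ux vy _ cya cxa | i j M x ux cx | i j M y vy cy] /= cons_ij;
  have [fixM _ _ _] := cons_ij.
- set M1 := upd M x a; set M2 := upd M1 y a.
  have ext2 : extends M M2 := extends_trans (@upd_extends _ _ _) (@upd_extends _ _ _).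
  have M1x : M1 x = Some a by apply/upd_self/compat_letter.
  have M2x : M2 x = Some a by rewrite /M2 upd_extends M1x.
  have M2y : M2 y = Some a.
    apply: upd_self; rewrite /M1.
    by case: (upd_cases M x a y) => ->; [exact: compat_letter | right].
  have fixM2 := extends_letters_fixed ext2 fixM.
  rewrite (onth_take ux) (onth_take vy).
  exact: consistent_cat ext2 cons_ij (consistent_pair fixM2 M2x M2y).
- have ext := @upd_extends M x None.
  have Mx : upd M x None x = Some None by apply/upd_self/compat_letter.
  have fixM' := extends_letters_fixed ext fixM.
  rewrite (onth_take ux) -[take j hv]cats0.
  exact: consistent_cat ext cons_ij (consistent_lambda fixM' Mx).
- have ext := @upd_extends M y None.
  have My : upd M y None y = Some None by apply/upd_self/compat_letter.
  have fixM' := extends_letters_fixed ext fixM.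
  rewrite (onth_take vy) -[take i hu]cats0.
  exact: consistent_cat ext cons_ij (consistent_sym (consistent_lambda fixM' My)).
Qed.

Lemma consistent_reach q : reach B u v q -> consistent_state q.
Proof.
elim=> [|q0 q1 _ cons_q0 step01]; last exact: consistent_step step01 cons_q0.
by split; rewrite /= ?take0.
Qed.

Lemma accepts_sound :
  accepts B u v -> exists S, subst S u = subst S v /\ forall X, size (S X) <= B X.
Proof.
case=> M /consistent_reach /=; rewrite !take_size => -[fixM _ _ eq_uv].
have lookup_letter o : lookup M (inl o) = o by rewrite /lookup fixM.
exists (filled_subst (lookup M)); split; last exact: size_filled_subst.
by rewrite -!pmap_hat.
Qed.

Variable sol : Gamma -> seq Sigma.
Hypothesis sol_bounded : forall X, size (sol X) <= B X.

Definition sol_fill (s : sym) : option Sigma :=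
  match s with inl o => o | inr (X, k) => onth (sol X) k end.

Lemma pmap_sol_fill_hat w : pmap sol_fill (hat B w) = subst sol w.
Proof.
rewrite pmap_hat // (eq_subst (S2 := sol)) // => X.
by rewrite /filled_subst /= pmap_map; apply: pmap_onth_iota (sol_bounded X).
Qed.

Definition below_sol (M : psubst) := forall s, M s = None \/ M s = Some (sol_fill s).

Lemma below_sol_init : below_sol (init_state Sigma Gamma).2.
Proof. by case=> [o|p]; [right | left]. Qed.

Lemma below_sol_upd (M : psubst) x : below_sol M -> below_sol (upd M x (sol_fill x)).
Proof.
move=> le_M s; rewrite /upd; case: (M x) => [c|]; first exact: le_M.
by case: eqP => [->|_]; [right | exact: le_M].
Qed.

Lemma below_sol_compat (M : psubst) x y :
  below_sol M -> sol_fill x = sol_fill y -> compat M x y.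
Proof.
move=> le_M eq_xy; rewrite /compat.
by case: (le_M x) => ->; last case: (le_M y) => ->.
Qed.

Lemma accepts_from i j (M : psubst) :
  i <= size hu -> j <= size hv -> reach B u v ((i, j), M) -> below_sol M ->
  pmap sol_fill (drop i hu) = pmap sol_fill (drop j hv) -> accepts B u v.
Proof.
have [n] := ubnP (size hu - i + (size hv - j)).
elim: n i j M => // n IHn i j M lt_n le_i le_j run le_M eq_rest.
case: (pmap_eq_cases eq_rest) => [[du dv] | [x [s [ux fx]]] | [y [t [vy fy]]]
                                   | [x [y [s [t [ux vy fxy eq_st]]]]]].
- have [ei ej] : i = size hu /\ j = size hv.
    by move: du dv => /(congr1 size) + /(congr1 size); rewrite !size_drop /=; lia.
  by exists M; rewrite -ei -ej.
- have [lt_i ux' du] := drop_onth ux.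
  apply: (IHn i.+1 j (upd M x None)); try lia.
  + exact/(reach_step run)/step_left/below_sol_compat.
  + by rewrite -fx; apply: below_sol_upd.
  + by rewrite du -eq_rest ux /= fx.
- have [lt_j vy' dv] := drop_onth vy.
  apply: (IHn i j.+1 (upd M y None)); try lia.
  + exact/(reach_step run)/step_right/below_sol_compat.
  + by rewrite -fy; apply: below_sol_upd.
  + by rewrite dv eq_rest vy /= fy.
- have [lt_i ux' du] := drop_onth ux; have [lt_j vy' dv] := drop_onth vy.
  apply: (IHn i.+1 j.+1 (upd (upd M x (sol_fill x)) y (sol_fill x))); try lia.
  + apply: reach_step run (step_both (a := sol_fill x) ux' vy' _ _ _);
      exact: below_sol_compat.
  + by rewrite [X in upd _ y X]fxy; do 2!apply: below_sol_upd.
  + by rewrite du dv.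
Qed.

Lemma accepts_complete : subst sol u = subst sol v -> accepts B u v.
Proof.
move=> eq_uv.
apply: (accepts_from (i := 0) (j := 0) (M := (init_state Sigma Gamma).2)) => //.
- exact: reach_init.
- exact: below_sol_init.
- by rewrite !drop0 !pmap_sol_fill_hat.
Qed.

End Runs.
End EquationAutomaton.

Theorem mainTheorem1 (Sigma Gamma : finType) (u v : seq (Sigma + Gamma))
    (B : Gamma -> nat) :
  accepts B u v <->
  exists S : Gamma -> seq Sigma,
    subst S u = subst S v /\ forall X : Gamma, size (S X) <= B X.
Proof.
split; first exact: accepts_sound.
by case=> sol [eq_uv bounded]; apply: accepts_complete bounded eq_uv.
Qed.
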